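(* Let $p$ be a prime power and let $G(p)$ be the point–line incidence graph of a projective plane of order $p$: a bipartite graph on $n = 2(p^2+p+1)$ vertices whose parts are the $p^2+p+1$ points and the $p^2+p+1$ lines, a point being adjacent to a line iff it lies on the line (so $G(p)$ is $(p+1)$-regular and contains no $K_{2,2}$). Then $$\chi_{2K_2}(G(p)) \ge \sqrt{\frac{2(p^2+p+1)(p+1)}{2p+1}} + \frac12 \ge \sqrt{\frac n2 + \frac{\sqrt n}{4}} + \frac12.$$
   Context: All graphs are finite and simple. For a fixed bipartite graph $H$, a proper vertex coloring of a graph $G$ is called an $H$-avoiding coloring if for any two color classes, the subgraph of $G$ induced by their union contains no induced subgraph isomorphic to $H$. $\chi_H(G)$ denotes the minimum number of colors in an $H$-avoiding coloring of $G$. $2K_2$ is the disjoint union of two edges. *)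

From mathcomp Require Import all_boot all_order all_algebra.
Set Implicit Arguments. Unset Strict Implicit. Unset Printing Implicit Defensive.

Definition simple_graph (V : finType) (e : rel V) : bool :=
  [forall x, ~~ e x x] && [forall x, forall y, e x y == e y x].

Definition has_induced_copy (W V : finType) (eH : rel W) (e : rel V)
    (S : pred V) : bool :=
  [exists f : {ffun W -> V},
     injectiveb f && [forall x, f x \in S] &&
     [forall x, forall y, e (f x) (f y) == eH x y]].

Definition proper_coloring (V : finType) (e : rel V) (k : nat)
    (c : {ffun V -> 'I_k}) : bool :=
  [forall x, forall y, e x y ==> (c x != c y)].

Definition H_avoiding (W V : finType) (eH : rel W) (e : rel V) (k : nat)
    (c : {ffun V -> 'I_k}) : bool :=
  proper_coloring e c &&
  [forall i : 'I_k, forall j : 'I_k,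
     ~~ has_induced_copy eH e [pred v | (c v == i) || (c v == j)]].

(* chi_H(G): least k admitting an H-avoiding k-coloring (searched among
   k <= #|V|; if none exists below #|V|+1, the value is #|V|+1). *)
Definition chi_H (W V : finType) (eH : rel W) (e : rel V) : nat :=
  find (fun k => [exists c : {ffun V -> 'I_k}, H_avoiding eH e c])
       (iota 0 #|V|.+1).

Definition two_K2 : rel 'I_4 :=
  fun x y => ((val x == 0) && (val y == 1)) || ((val x == 1) && (val y == 0))
          || ((val x == 2) && (val y == 3)) || ((val x == 3) && (val y == 2)).

Definition prime_power (p : nat) : Prop :=
  exists q k, prime q /\ (0 < k) /\ p = q ^ k.

Definition collinear (P L : finType) (inc : P -> L -> bool) (x y z : P) :=
  [exists l, [&& inc x l, inc y l & inc z l]].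

Definition projective_plane_of_order (P L : finType) (inc : P -> L -> bool)
    (p : nat) : Prop :=
  (forall x y : P, x != y -> #|[set l | inc x l && inc y l]| = 1) /\
  (forall l m : L, l != m -> #|[set x | inc x l && inc x m]| = 1) /\
  (exists a b c d : P, [/\ uniq [:: a; b; c; d],
      ~~ collinear inc a b c, ~~ collinear inc a b d,
      ~~ collinear inc a c d & ~~ collinear inc b c d]) /\
  (forall l : L, #|[set x | inc x l]| = p.+1).

Definition incidence_graph (P L : finType) (inc : P -> L -> bool)
    : rel (P + L)%type :=
  fun u v => match u, v with
             | inl x, inr l => inc x l
             | inr l, inl x => inc x l
             | _, _ => false
             end.

From mathcomp Require Import all_boot all_order all_algebra zify lra.
Import Order.TTheory GRing.Theory Num.Theory.
Set Implicit Arguments. Unset Strict Implicit.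

(* Fix an H-avoiding k-colouring c and two colours i, j.  The incidences
   (x, l) coloured {i, j} form a bipartite graph with no induced 2K_2, so the
   neighbourhoods on each side are nested and a vertex of maximum degree
   dominates its side.  Taking such a point x0 and line l0, two points on two
   common lines would coincide, hence every bichromatic incidence goes through
   x0 or l0: there are at most (p + 1) + (p + 1) - 1 = 2p + 1 of them.  Each of
   the (p^2 + p + 1)(p + 1) incidences is counted by exactly two ordered pairs
   of distinct colours, so 2(p^2+p+1)(p+1) <= k(k-1)(2p+1), and solving this
   quadratic gives the first bound; the second is an elementary inequality. *)

Lemma card_as_sum (A : finType) (Q : pred A) :
  #|[set a | Q a]| = (\sum_a Q a)%N.
Proof.
rewrite -sum1dep_card big_mkcond /=; apply: eq_bigr => a _.
by case: (Q a).
Qed.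

Lemma sum_cond_const (A : finType) (Q : pred A) (F : A -> nat) n :
  (forall a, F a = if Q a then n else 0%N) ->
  (\sum_a F a = #|[set a | Q a]| * n)%N.
Proof.
move=> HF; rewrite -sum_nat_cond_const [RHS]big_mkcond /=.
by apply: eq_bigr => a _; rewrite HF.
Qed.

Lemma card_rel_rows (A B : finType) (r : A -> B -> bool) :
  #|[set z : A * B | r z.1 z.2]| = (\sum_a #|[set b | r a b]|)%N.
Proof.
rewrite card_as_sum -(pair_bigA _ (fun a b => (r a b : nat))) /=.
by apply: eq_bigr => a _; rewrite card_as_sum.
Qed.

Lemma card_rel_cols (A B : finType) (r : A -> B -> bool) :
  #|[set z : A * B | r z.1 z.2]| = (\sum_b #|[set a | r a b]|)%N.
Proof.
rewrite card_as_sum -(pair_bigA _ (fun a b => (r a b : nat))) /= exchange_big.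
by apply: eq_bigr => b _; rewrite card_as_sum.
Qed.

Lemma card_offdiag k : #|[set ij : 'I_k * 'I_k | ij.1 != ij.2]| = (k * k.-1)%N.
Proof.
have row (i : 'I_k) : #|[set j | i != j]| = k.-1.
  rewrite -[in RHS](card_ord k) -(cardsC1 i); apply: eq_card => j.
  by rewrite !inE eq_sym.
rewrite (card_rel_rows (fun i j : 'I_k => i != j)).
under eq_bigr do rewrite row.
by rewrite sum_nat_const card_ord.
Qed.

(* In a bipartite relation without induced 2K_2 (any two disjoint edges are
   joined by a cross edge) the neighbourhoods form a chain, so a vertex of
   maximum degree is adjacent to every non-isolated vertex of the other side. *)
Lemma two_K2_free_dominating (A B : finType) (r : A -> B -> bool) (a0 : A) :
  (forall x1 x2 l1 l2, r x1 l1 -> r x2 l2 -> x1 != x2 -> l1 != l2 ->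
     r x1 l2 || r x2 l1) ->
  exists x0, forall x l, r x l -> r x0 l.
Proof.
move=> free.
have [x0 _ x0_max] :=
  @arg_maxnP A a0 xpredT (fun x => #|[set l | r x l]|) isT.
exists x0 => x l xl; apply/negPn/negP => nx0l.
have xx0 : x != x0 by apply: contraNneq nx0l => <-.
have : [set l | r x0 l] \proper [set l | r x l].
  apply/properP; split; last by exists l; rewrite !inE.
  apply/subsetP => l'; rewrite !inE => x0l'; apply/negPn/negP => nxl'.
  have ll' : l != l' by apply: contraNneq nx0l => ->.
  by have := free _ _ _ _ xl x0l' xx0 ll'; rewrite (negbTE nxl') (negbTE nx0l).
by move/proper_card; rewrite ltnNge => /negP; apply; exact: x0_max.
Qed.

Lemma incidence_induced_2K2 (P L : finType) (inc : P -> L -> bool)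
    (S : pred (P + L)) x1 l1 x2 l2 :
  inc x1 l1 -> inc x2 l2 -> ~~ inc x1 l2 -> ~~ inc x2 l1 ->
  x1 != x2 -> l1 != l2 ->
  inl x1 \in S -> inr l1 \in S -> inl x2 \in S -> inr l2 \in S ->
  has_induced_copy two_K2 (incidence_graph inc) S.
Proof.
move=> x1l1 x2l2 /negbTE nx1l2 /negbTE nx2l1 x12 l12 Sx1 Sl1 Sx2 Sl2.
pose f := [ffun t : 'I_4 => if val t == 0 then inl x1
   else if val t == 1 then inr l1 else if val t == 2 then inl x2 else inr l2]
   : {ffun 'I_4 -> (P + L)%type}.
apply/existsP; exists f; apply/andP; split; first (apply/andP; split).
- apply/injectiveP => -[[|[|[|[|a]]]] Ha] // [[|[|[|[|b]]]] Hb] //;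
  rewrite !ffunE /= => E; first [ by apply: val_inj | by case: E
    | (case: E => E; subst; by rewrite eqxx in x12 l12) ].
- by apply/forallP => -[[|[|[|[|a]]]] Ha] //; rewrite !ffunE.
- apply/forallP => -[[|[|[|[|a]]]] Ha] //; apply/forallP => -[[|[|[|[|b]]]] Hb] //;
  by rewrite !ffunE /= ?x1l1 ?x2l2 ?nx1l2 ?nx2l1.
Qed.

Section Colouring.
Variables (P L : finType) (inc : P -> L -> bool) (k : nat).
Variable c : {ffun (P + L)%type -> 'I_k}.

Definition bichromatic (i j : 'I_k) (x : P) (l : L) : bool :=
  inc x l && (((c (inl x) == i) && (c (inr l) == j)) ||
              ((c (inl x) == j) && (c (inr l) == i))).

Lemma bichromatic_incident i j x l : bichromatic i j x l -> inc x l.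
Proof. by case/andP. Qed.

Hypothesis proper : proper_coloring (incidence_graph inc) c.

Lemma incident_colours_differ x l : inc x l -> c (inl x) != c (inr l).
Proof. by move: proper => /forallP/(_ (inl x))/forallP/(_ (inr l))/implyP. Qed.

Lemma bichromatic_diag i x l : ~~ bichromatic i i x l.
Proof.
rewrite /bichromatic orbb; apply/andP => -[xl /andP[/eqP ci /eqP cj]].
by have := incident_colours_differ xl; rewrite ci cj eqxx.
Qed.

Lemma bichromatic_cross i j x1 l1 x2 l2 :
  bichromatic i j x1 l1 -> bichromatic i j x2 l2 -> inc x1 l2 ->
  bichromatic i j x1 l2.
Proof.
move=> /andP[_ c1] /andP[_ c2] x1l2; rewrite /bichromatic x1l2 /=.
have := incident_colours_differ x1l2; move: c1 c2.
by case/orP => /andP[/eqP-> _]; case/orP => /andP[_ /eqP->]; rewrite ?eqxx ?orbT.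
Qed.

Lemma card_bichromatic_pairs x l :
  #|[set ij : 'I_k * 'I_k | bichromatic ij.1 ij.2 x l]| = (2 * inc x l)%N.
Proof.
case: (boolP (inc x l)) => xl; last first.
  by apply: eq_card0 => ij; rewrite !inE /bichromatic (negbTE xl).
have cxl := incident_colours_differ xl.
rewrite (_ : [set ij | _] = [set (c (inl x), c (inr l)); (c (inr l), c (inl x))]).
  by rewrite cards2 xpair_eqE (negbTE cxl).
apply/setP => -[i j]; rewrite !inE /bichromatic xl /= !xpair_eqE.
by rewrite ![i == _]eq_sym ![j == _]eq_sym [(c (inr l) == i) && _]andbC.
Qed.

Lemma incidences_by_colour_pairs :
  (2 * #|[set z : P * L | inc z.1 z.2]| =
   \sum_(ij : 'I_k * 'I_k) #|[set z : P * L | bichromatic ij.1 ij.2 z.1 z.2]|)%N.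
Proof.
rewrite card_as_sum big_distrr /=.
transitivity (\sum_(z : P * L) \sum_(ij : 'I_k * 'I_k)
                 (bichromatic ij.1 ij.2 z.1 z.2 : nat))%N.
  by apply: eq_bigr => z _; rewrite -card_as_sum card_bichromatic_pairs.
by rewrite exchange_big; apply: eq_bigr => ij _; rewrite card_as_sum.
Qed.

Lemma incidences_colour_bound b :
  (forall i j, #|[set z : P * L | bichromatic i j z.1 z.2]| <= b)%N ->
  (2 * #|[set z : P * L | inc z.1 z.2]| <= k * k.-1 * b)%N.
Proof.
move=> bound; rewrite incidences_by_colour_pairs -card_offdiag.
rewrite -sum_nat_cond_const [X in (_ <= X)%N]big_mkcond /=.
apply: leq_sum => -[i j] _ /=; case: eqVneq => [<-|_]; last exact: bound.
by rewrite leqn0; apply/eqP/eq_card0 => z; rewrite !inE (negbTE (bichromatic_diag _ _ _)).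
Qed.

End Colouring.

Lemma bichromatic_2K2_free (P L : finType) (inc : P -> L -> bool) k
    (c : {ffun (P + L)%type -> 'I_k}) i j x1 x2 l1 l2 :
  H_avoiding two_K2 (incidence_graph inc) c ->
  bichromatic inc c i j x1 l1 -> bichromatic inc c i j x2 l2 ->
  x1 != x2 -> l1 != l2 ->
  bichromatic inc c i j x1 l2 || bichromatic inc c i j x2 l1.
Proof.
move=> /andP[proper /forallP/(_ i)/forallP/(_ j) no_copy] b1 b2 x12 l12.
apply/negPn/negP; rewrite negb_or => /andP[nb12 nb21].
have nx1l2 : ~~ inc x1 l2.
  by apply: contra nb12; apply: bichromatic_cross b1 b2.
have nx2l1 : ~~ inc x2 l1.
  by apply: contra nb21; apply: bichromatic_cross b2 b1.
case/negP: no_copy; move: b1 b2 => /andP[x1l1 c1] /andP[x2l2 c2].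
apply: (incidence_induced_2K2 x1l1 x2l2 nx1l2 nx2l1 x12 l12); rewrite inE /=.
- by case/orP: c1 => /andP[-> _]; rewrite ?orbT.
- by case/orP: c1 => /andP[_ ->]; rewrite ?orbT.
- by case/orP: c2 => /andP[-> _]; rewrite ?orbT.
- by case/orP: c2 => /andP[_ ->]; rewrite ?orbT.
Qed.

Lemma chi_H_cases (W V : finType) (eH : rel W) (e : rel V) :
  chi_H eH e = #|V|.+1 \/
  exists c : {ffun V -> 'I_(chi_H eH e)}, H_avoiding eH e c.
Proof.
rewrite /chi_H; set F := (fun k => _); set s := iota 0 _.
have := find_size F s; rewrite size_iota leq_eqVlt => /orP[/eqP ->|lt];
  [by left | right].
have hasF : has F s by rewrite has_find size_iota.
by have := nth_find 0 hasF; rewrite nth_iota // add0n => /existsP.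
Qed.

Section ProjectivePlane.
Variables (P L : finType) (inc : P -> L -> bool) (p : nat).
Hypothesis plane : projective_plane_of_order inc p.

Lemma common_line_unique x y l m :
  x != y -> inc x l -> inc y l -> inc x m -> inc y m -> l = m.
Proof.
case: plane => two_points _ nxy xl yl xm ym.
have /eqP/cards1P[l0 def_l0] := two_points x y nxy.
have : l \in [set l | inc x l && inc y l] by rewrite inE xl yl.
have : m \in [set l | inc x l && inc y l] by rewrite inE xm ym.
by rewrite def_l0 !inE => /eqP -> /eqP ->.
Qed.

Lemma common_line_exists x y : x != y -> exists l, inc x l && inc y l.
Proof.
case: plane => two_points _ nxy; have /eqP/cards1P[l0 def_l0] := two_points x y nxy.
exists l0; have : l0 \in [set l | inc x l && inc y l] by rewrite def_l0 set11.
by rewrite inE.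
Qed.

(* Every point misses some line: otherwise the non-collinear quadrangle
   would have three collinear points. *)
Lemma point_off_some_line x : exists l, ~~ inc x l.
Proof.
case: plane => two_points [_ [[a [b [c [d [abcd nabc _ _ _]]]]] _]].
case: (pickP (fun l => ~~ inc x l)) => [l xl|on_all]; first by exists l.
have all_x l : inc x l by have := on_all l; rewrite /= => /negbFE.
move: abcd; rewrite /= !inE !negb_or.
move=> /andP[/and3P[ab ac _] /andP[/andP[bc _] _]].
case/negP: nabc; apply/existsP.
have [[lbc /andP[bl cl]] [lab /andP[al bl']]] :=
  (common_line_exists bc, common_line_exists ab).
case: (eqVneq x a) => [<-|xa]; first by exists lbc; rewrite all_x bl cl.
have [lac /andP[al' cl']] := common_line_exists ac.
have lab_ac : lab = lac by apply: (common_line_unique xa); rewrite ?all_x.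
by exists lab; rewrite al bl' lab_ac cl'.
Qed.

(* Each point lies on p + 1 lines: counting the pairs (m, y) with x on m and
   y on m and on a line l missing x, both ways. *)
Lemma point_degree x : #|[set l | inc x l]| = p.+1.
Proof.
have [l xl] := point_off_some_line x.
case: plane => two_points [two_lines [_ line_size]].
pose r m y := inc x m && inc y m && inc y l.
have := card_rel_cols r; rewrite card_rel_rows.
rewrite (sum_cond_const (Q := inc x) (n := 1%N)); last first.
  move=> m; case xm: (inc x m); last by apply: eq_card0 => y; rewrite !inE /r xm.
  have ml : m != l by apply: contraNneq xl => <-.
  by rewrite -(two_lines _ _ ml); apply: eq_card => y; rewrite !inE /r xm.
rewrite (sum_cond_const (Q := inc^~ l) (n := 1%N)); last first.
  move=> y; case yl: (inc y l); last by apply: eq_card0 => m; rewrite !inE /r yl andbF.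
  have xy : x != y by apply: contraNneq xl => ->.
  by rewrite -(two_points _ _ xy); apply: eq_card => m; rewrite !inE /r yl andbT.
by rewrite !muln1 line_size.
Qed.

(* A plane of order p has p^2 + p + 1 points: count the pairs (y, m) with
   y != a on a line m through a fixed point a. *)
Lemma card_points : #|P| = (p * p.+1).+1.
Proof.
case: plane => two_points [_ [[a _] line_size]].
pose r y m := (y != a) && inc a m && inc y m.
have := card_rel_cols r; rewrite card_rel_rows.
rewrite (sum_cond_const (Q := fun y => y != a) (n := 1%N)); last first.
  move=> y; case: eqP => [->|/eqP ya]; first by apply: eq_card0 => m; rewrite !inE /r eqxx.
  rewrite eq_sym in ya; rewrite -(two_points _ _ ya).
  by apply: eq_card => m; rewrite !inE /r eq_sym ya.
rewrite (sum_cond_const (Q := inc a) (n := p)); last first.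
  move=> m; case am: (inc a m); last by apply: eq_card0 => y; rewrite !inE /r am andbF.
  have := line_size m; rewrite (cardsD1 a) inE am add1n => -[<-].
  by apply: eq_card => y; rewrite !inE /r am andbT.
rewrite point_degree muln1 (_ : [set y | y != a] = [set~ a]); last first.
  by apply/setP => y; rewrite !inE.
rewrite cardsC1 mulnC => <-.
by rewrite prednK //; apply/card_gt0P; exists a.
Qed.

Lemma card_incidences : #|[set z : P * L | inc z.1 z.2]| = (#|P| * p.+1)%N.
Proof.
rewrite card_rel_rows.
by under eq_bigr do rewrite point_degree; rewrite sum_nat_const.
Qed.

Section TwoColourClasses.
Variables (k : nat) (c : {ffun (P + L)%type -> 'I_k}).
Hypothesis avoiding : H_avoiding two_K2 (incidence_graph inc) c.

Lemma bichromatic_star i j x l :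
  bichromatic inc c i j x l -> exists x0 l0, bichromatic inc c i j x0 l0 /\
    forall x l, bichromatic inc c i j x l -> (x == x0) || (l == l0).
Proof.
move=> xl; have free := bichromatic_2K2_free (i := i) (j := j) avoiding.
have [x0 dom_x0] := two_K2_free_dominating x free.
have [l0 dom_l0] := @two_K2_free_dominating L P
  (fun l x => bichromatic inc c i j x l) l
  (fun l1 l2 x1 x2 b1 b2 l12 x12 => etrans (orbC _ _) (free _ _ _ _ b1 b2 x12 l12)).
exists x0, l0; split; first exact/dom_l0/dom_x0/xl.
move=> y m ym; apply/negPn/negP; rewrite negb_or => /andP[yx0 ml0].
have x0m := dom_x0 _ _ ym; have yl0 := dom_l0 _ _ ym; have x0l0 := dom_l0 _ _ x0m.
case/negP: ml0; apply/eqP.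
by apply: (common_line_unique yx0); apply: bichromatic_incident; eassumption.
Qed.

(* Hence two colour classes span at most (p + 1) + (p + 1) - 1 incidences. *)
Lemma card_bichromatic_le i j :
  (#|[set z : P * L | bichromatic inc c i j z.1 z.2]| <= 2 * p + 1)%N.
Proof.
case: plane => _ [_ [_ line_size]].
set D := [set z : P * L | _].
case: (set_0Vmem D) => [->|[[x l]]]; first by rewrite cards0.
rewrite inE /= => /bichromatic_star[x0 [l0 [x0l0 star]]].
pose A := setX [set x0] [set m | inc x0 m].
pose B := setX [set y | inc y l0] [set l0].
have covered : D \subset A :|: B.
  apply/subsetP => -[y m]; rewrite !inE /= => ym.
  have ym' := bichromatic_incident ym.
  by case/orP: (star _ _ ym) => /eqP E; subst; rewrite ym' eqxx ?orbT.
have meet : (0 < #|A :&: B|)%N.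
  by apply/card_gt0P; exists (x0, l0); rewrite !inE !eqxx (bichromatic_incident x0l0).
have := subset_leq_card covered.
rewrite cardsU !cardsX !cards1 point_degree line_size mul1n muln1.
by move: meet; set s := #|A :&: B|; set d := #|D|; lia.
Qed.

End TwoColourClasses.

Lemma chi_incidence_bound :
  (2 * (#|P| * p.+1) <= chi_H two_K2 (incidence_graph inc) *
     (chi_H two_K2 (incidence_graph inc)).-1 * (2 * p + 1))%N.
Proof.
case: (chi_H_cases two_K2 (incidence_graph inc)) => [->|[c avoiding]].
  by rewrite card_sum card_points /=; move: #|L| => m; nia.
have proper : proper_coloring (incidence_graph inc) c by case/andP: avoiding.
rewrite -card_incidences; apply: (incidences_colour_bound proper) => i j.
exact: (card_bichromatic_le avoiding i j).
Qed.

End ProjectivePlane.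

Local Open Scope ring_scope.

Lemma sqrt_le_of_sqr (R : rcfType) (a b : R) :
  0 <= b -> a <= b ^+ 2 -> Num.sqrt a <= b.
Proof. by move=> b0 ab; rewrite -(ger0_norm b0) -sqrtr_sqr ler_sqrt ?sqr_ge0. Qed.

(* Solving the quadratic counting bound: A <= chi (chi - 1) q forces
   chi >= sqrt (A / q) + 1/2, as (K + 1/2)^2 >= K (K + 1). *)
Lemma chi_real_bound (R : rcfType) (A q chi : nat) :
  (0 < A)%N -> (0 < q)%N -> (A <= chi * chi.-1 * q)%N ->
  Num.sqrt (A%:R / q%:R : R) + 2^-1 <= chi%:R.
Proof.
move=> A_gt0 q_gt0; case: chi => [|K] /=; first by rewrite mul0n leqNgt A_gt0.
rewrite -(ler_nat R) !natrM -natr1 => AK.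
have q0 : 0 < q%:R :> R by rewrite ltr0n.
have K0 : 0 <= K%:R :> R by rewrite ler0n.
have ratio : A%:R / q%:R <= K%:R * (K%:R + 1) :> R.
  by rewrite ler_pdivrMr //; nra.
suff : Num.sqrt (A%:R / q%:R : R) <= K%:R + 2^-1 by lra.
by apply: sqrt_le_of_sqr; nra.
Qed.

(* With m = x^2 + x + 1 and n = 2m, the bound sqrt (n/2 + sqrt n / 4) is
   weaker than sqrt (2m (x + 1) / (2x + 1)): it reduces to
   sqrt (2m) (2x + 1) <= 4m, i.e. (2x + 1)^2 <= 8m. *)
Lemma incidence_bound_dominates (R : rcfType) (x : R) : 0 <= x ->
  Num.sqrt (2 * (x ^+ 2 + x + 1) / 2 + Num.sqrt (2 * (x ^+ 2 + x + 1)) / 4)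
  <= Num.sqrt (2 * (x ^+ 2 + x + 1) * (x + 1) / (2 * x + 1)).
Proof.
move=> x0; set m := x ^+ 2 + x + 1.
have m0 : 0 < m by rewrite /m; nra.
have q0 : 0 < 2 * x + 1 by lra.
rewrite ler_sqrt; last by rewrite divr_ge0; nra.
rewrite ler_pdivlMr //.
set s := Num.sqrt _.
have s0 : 0 <= s := sqrtr_ge0 _.
have s2 : s ^+ 2 = 2 * m by rewrite sqr_sqrtr //; lra.
have : s * (2 * x + 1) <= 4 * m.
  rewrite -ler_sqr ?nnegrE ?mulr_ge0 ?(ltW q0) //; last by lra.
  by rewrite exprMn s2 /m; nra.
lra.
Qed.

Unset Implicit Arguments. Set Strict Implicit.
Theorem corollary6 (R : rcfType) (p : nat) (P L : finType)
    (inc : P -> L -> bool) :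
  prime_power p ->
  projective_plane_of_order inc p ->
  let n : nat := (2 * (p ^ 2 + p + 1))%N in
  let chi : nat := chi_H two_K2 (incidence_graph inc) in
  Num.sqrt ((2 * (p ^ 2 + p + 1) * (p + 1))%:R / (2 * p + 1)%:R : R)
      + 2^-1 <= chi%:R /\
  Num.sqrt (n%:R / 2 + Num.sqrt (n%:R : R) / 4) + 2^-1
      <= Num.sqrt ((2 * (p ^ 2 + p + 1) * (p + 1))%:R / (2 * p + 1)%:R : R)
         + 2^-1.
Proof.
move=> _ plane n chi.
have count := chi_incidence_bound plane; rewrite (card_points plane) in count.
split.
  by apply: chi_real_bound; rewrite ?addn1 //; lia.
have -> : n%:R = 2 * (p%:R ^+ 2 + p%:R + 1) :> R by rewrite /n natrM !natrD natrX.
have -> : (2 * (p ^ 2 + p + 1) * (p + 1))%:R =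
          2 * (p%:R ^+ 2 + p%:R + 1) * (p%:R + 1) :> R.
  by rewrite !natrM !natrD natrX.
have -> : (2 * p + 1)%:R = 2 * p%:R + 1 :> R by rewrite natrD natrM.
by rewrite lerD2r; apply: incidence_bound_dominates; rewrite ler0n.
Qed.
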